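(* There is a function $C(t,\epsilon)$ such that the following holds for every positive integer $t$ and every $\epsilon\in(0,1)$: let $G$ be a connected balanced bipartite graph with parts $X,Y$ each of order $n$, with $\delta(G)\geq 3C(t,\epsilon)$ and with no induced $S_{t,t}$. Then for any two vertices $a,b$ in the same part of $G$ there is a vertex $c$ in that same part such that $|N(a)\setminus N(c)|\leq \epsilon|N(a)|$ and $|N(b)\setminus N(c)|\leq \epsilon|N(b)|$.
   Context: For positive integers $a,b$, the biclaw $S_{a,b}$ is the graph with vertex set $\{x,x_1,\dots,x_a,y,y_1,\dots,y_b\}$ and edges $xy$, $xy_1,\dots,xy_b$, $yx_1,\dots,yx_a$; ''no induced $S_{t,t}$'' means no induced subgraph isomorphic to $S_{t,t}$. $N(v)$ is the neighbourhood of $v$ and $\delta(G)$ the minimum degree. *)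

From HB Require Import structures.
From mathcomp Require Import all_boot all_order all_algebra.
From mathcomp Require Export reals.
Set Implicit Arguments. Unset Strict Implicit. Unset Printing Implicit Defensive.

(* A simple graph is a symmetric irreflexive relation [E] on a finite type [T];
   the vertex set is all of [T]. *)
Definition simple_graph (T : finType) (E : rel T) : Prop :=
  symmetric E /\ irreflexive E.

Definition nbhd (T : finType) (E : rel T) (v : T) : {set T} := [set u | E v u].

Definition connected_graph (T : finType) (E : rel T) : Prop :=
  forall u v : T, connect E u v.

Definition bipartition (T : finType) (E : rel T) (X Y : {set T}) : Prop :=
  [/\ X :&: Y = set0, X :|: Y = setT &
      forall u v, E u v -> (u \in X) && (v \in Y) || (u \in Y) && (v \in X)].

(* Vertices of the biclaw S_{a,b}:
   inl (inl tt) = x,  inl (inr tt) = y,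
   inr (inl i)  = x_i (i < a),  inr (inr j) = y_j (j < b). *)
Definition biclaw_vtx (a b : nat) : finType :=
  ((unit + unit) + ('I_a + 'I_b))%type.

(* Edges: xy, x y_j (all j), y x_i (all i). *)
Definition biclaw_adj (a b : nat) (u v : biclaw_vtx a b) : bool :=
  match u, v with
  | inl (inl _), inl (inr _) => true
  | inl (inr _), inl (inl _) => true
  | inl (inl _), inr (inr _) => true
  | inr (inr _), inl (inl _) => true
  | inl (inr _), inr (inl _) => true
  | inr (inl _), inl (inr _) => true
  | _, _ => false
  end.

Definition has_induced_biclaw (T : finType) (E : rel T) (a b : nat) : Prop :=
  exists f : biclaw_vtx a b -> T,
    injective f /\ forall u v, E (f u) (f v) = biclaw_adj u v.

(* Let x ~ y in a bipartite graph without induced S_{t,t}, and let S be a set of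
   at least 2t/e neighbours of x other than y.  Fewer than t (2/e)^t neighbours of y
   miss more than an e-fraction of S: otherwise, choosing t times a vertex of S
   that is non-adjacent to an (e/2)-fraction of the remaining such neighbours
   produces t vertices of S and t neighbours of y with no edge between them,
   i.e. an induced S_{t,t} centred at xy.  Pushing this along a walk
   a z1 m z2 b of length 4, and using the minimum degree to avoid the few bad
   vertices at each step, gives a vertex q at distance 4 from a whose
   neighbourhood contains all but an e-fraction of N(a) and of N(b).  With
   e = 1/2 the same tools show that "joined by a walk of length 4" is preserved
   by appending a path of length 2, so by connectivity it relates any two
   vertices of the same part. *)

From HB Require Import structures.
From mathcomp Require Import all_boot all_order all_algebra.
From mathcomp Require Import reals.
From mathcomp Require Import ring lra zify.
Import Order.TTheory GRing.Theory Num.Theory.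
Set Implicit Arguments. Unset Strict Implicit. Unset Printing Implicit Defensive.
Local Open Scope ring_scope.

Lemma exists_inj_into (T : finType) (A : {set T}) n :
  (n <= #|A|)%N -> exists2 g : 'I_n -> T, injective g & forall i, g i \in A.
Proof.
move=> nA; exists (fun i => enum_val (widen_ord nA i)); last by move=> i; exact: enum_valP.
by move=> i j /enum_val_inj/(congr1 val) /= /val_inj.
Qed.

Lemma exists_notin_of_card_lt (T : finType) (A B : {set T}) :
  (#|B| < #|A|)%N -> exists2 q, q \in A & q \notin B.
Proof.
move=> BA; apply/exists_inP; apply: contraTT BA => /exists_inPn AB.
by rewrite -leqNgt subset_leq_card //; apply/subsetP => q /AB; rewrite negbK.
Qed.

Lemma exists_notin2 (R : realFieldType) (T : finType) (A B1 B2 : {set T}) (M1 M2 : R) :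
  #|B1|%:R < M1 -> #|B2|%:R < M2 -> M1 + M2 <= #|A|%:R ->
  exists q, [/\ q \in A, q \notin B1 & q \notin B2].
Proof.
move=> B1M B2M AM; have /exists_notin_of_card_lt[q qA] : (#|B1 :|: B2| < #|A|)%N.
  rewrite -(ltr_nat R); apply: le_lt_trans (_ : (#|B1| + #|B2|)%:R < _).
    by rewrite ler_nat leq_card_setU.
  by rewrite natrD; lra.
by rewrite inE negb_or => /andP[qB1 qB2]; exists q.
Qed.

Lemma card_le_cover3 (T : finType) (A B C D : {set T}) :
  A \subset B :|: C :|: D -> (#|A| <= #|B| + #|C| + #|D|)%N.
Proof.
move=> /subset_leq_card /leq_trans -> //.
by apply: leq_trans (leq_card_setU _ _) _; rewrite leq_add2r leq_card_setU.
Qed.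

Lemma card_set_predE (T : finType) (A : {set T}) (P : pred T) :
  #|[set x in A | P x]| = (\sum_(x in A) P x)%N.
Proof.
rewrite -sum1_card big_mkcond [RHS]big_mkcond /=.
by apply: eq_bigr => x _; rewrite !inE; case: (x \in A); case: (P x).
Qed.

Definition anticomplete (T : finType) (E : rel T) (A B : {set T}) : Prop :=
  forall a b, a \in A -> b \in B -> ~~ E a b.

Definition missed (T : finType) (E : rel T) (a c : T) : nat :=
  #|nbhd E a :\: nbhd E c|.

Definition unlinked (T : finType) (E : rel T) (W Ys : {set T}) : {set T} :=
  [set v in W | [forall q in Ys, ~~ E v q]].

Definition far_nbrs (R : realFieldType) (T : finType) (E : rel T) (e : R)
    (S : {set T}) (y : T) : {set T} :=
  [set q in nbhd E y | e * #|S|%:R < #|S :\: nbhd E q|%:R].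

Definition walk4 (T : finType) (E : rel T) (a b : T) : Prop :=
  exists z1 m z2, [/\ E a z1, E z1 m, E m z2 & E z2 b].

Definition far_bound (R : realFieldType) (t : nat) (e : R) : R := t%:R / (e / 2) ^+ t.

(* [exists_walk4_dominator] works with accuracy e/4: a degree x >= 8t/e gives
   2t <= (e/4) x, and x >= 4/e lets e x absorb the additive errors. *)
Definition dom_degree (R : realFieldType) (t : nat) (e : R) : R :=
  16 * t%:R / e + 2 * far_bound t (e / 4) + 4 / e + 8.

Definition step_degree (R : realFieldType) (t : nat) : R :=
  dom_degree t (1 / 2 : R) + (4 * t + 4)%:R + far_bound t (1 / 2 : R).

Lemma far_bound_ge0 (R : realFieldType) t (e : R) : 0 < e -> 0 <= far_bound t e.
Proof. by move=> e0; rewrite divr_ge0 // exprn_ge0 // divr_ge0 // ltW. Qed.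

Lemma dom_degree_ge0 (R : realFieldType) t (e : R) : 0 < e -> 0 <= dom_degree t e.
Proof.
move=> e0; rewrite /dom_degree; have t_ge0 := ler0n R t.
have : 0 <= far_bound t (e / 4) by rewrite far_bound_ge0 ?divr_gt0.
have : 0 <= 16 * t%:R / e by apply: divr_ge0; lra.
have : 0 <= 4 / e by apply: divr_ge0; lra.
lra.
Qed.

Lemma dom_degree_large (R : realFieldType) t (e D : R) :
  0 < e -> e < 1 -> dom_degree t e <= D ->
  [/\ 2 * t%:R <= e / 4 * (D - 1),
      2 * t%:R <= e / 4 * (D - far_bound t (e / 4) - 1),
      2 * t%:R <= e / 4 * (D - (1 + e / 4 * D) - 1),
      far_bound t (e / 4) + far_bound t (e / 4) <= D &
      4 <= e * D].
Proof.
move=> e0 e1 deg; have eN0 := lt0r_neq0 e0.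
have M0 : 0 <= far_bound t (e / 4) by rewrite far_bound_ge0 ?divr_gt0.
have K0 : 0 <= 8 * t%:R / e by apply: divr_ge0; have := ler0n R t; lra.
have inv4 : 0 <= 4 / e by apply: divr_ge0; lra.
have eD : e * D <= D.
  by apply: ler_piMl; [have := dom_degree_ge0 t e0; lra | exact: ltW].
have tK x : 8 * t%:R / e <= x -> 2 * t%:R <= e / 4 * x.
  have <- : e / 4 * (8 * t%:R / e) = 2 * t%:R by field.
  by move=> /ler_wpM2l; apply; rewrite divr_ge0 ?ltW.
move: deg; rewrite /dom_degree => deg; split; [apply: tK; lra .. | lra |].
have <- : e * (4 / e) = 4 by field.
by rewrite ler_wpM2l ?ltW //; lra.
Qed.

Lemma step_degree_ge0 (R : realFieldType) t : 0 <= step_degree R t.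
Proof.
have : 0 <= dom_degree t (1 / 2 : R) by apply: dom_degree_ge0; lra.
have : 0 <= far_bound t (1 / 2 : R) by apply: far_bound_ge0; lra.
by rewrite /step_degree; have := ler0n R (4 * t + 4); lra.
Qed.

Section Bipartite.
Variables (T : finType) (E : rel T) (X Y : {set T}).
Hypothesis bipE : bipartition E X Y.

Lemma bipartition_memY w : (w \in Y) = (w \notin X).
Proof.
case: bipE => XY0 XYT _; apply/idP/idP => [wY | wX].
  by apply/negP => wX; have := in_set0 w; rewrite -XY0 inE wX wY.
by have := in_setT w; rewrite -XYT inE (negbTE wX).
Qed.

Lemma bipartition_edge u v : E u v -> (u \in X) = (v \notin X).
Proof.
case: bipE => _ _ /[apply]; rewrite !bipartition_memY.
by case: (u \in X); case: (v \in X).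
Qed.

Lemma bipartition_nonedge u v : (u \in X) = (v \in X) -> E u v = false.
Proof.
move=> uv; apply/negbTE/negP => /bipartition_edge.
by rewrite uv; case: (v \in X).
Qed.

Lemma bipartition_edge_part P u v :
  P = X \/ P = Y -> E u v -> (u \in P) = (v \notin P).
Proof.
move=> PXY /bipartition_edge uv.
by case: PXY => ->; rewrite ?bipartition_memY uv ?negbK.
Qed.

Lemma walk4_part P a b : P = X \/ P = Y -> walk4 E a b -> (a \in P) = (b \in P).
Proof.
move=> PXY [z1 [m [z2 [az1 z1m mz2 z2b]]]].
by rewrite !(bipartition_edge_part PXY az1, bipartition_edge_part PXY z1m,
  bipartition_edge_part PXY mz2, bipartition_edge_part PXY z2b) !negbK.
Qed.

End Bipartite.

Lemma biclaw_of_anticomplete (T : finType) (E : rel T) (X Y : {set T}) t x y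
    (A B : {set T}) :
  simple_graph E -> bipartition E X Y ->
  E x y -> A \subset nbhd E y -> x \notin A -> B \subset nbhd E x -> y \notin B ->
  (t <= #|A|)%N -> (t <= #|B|)%N -> anticomplete E A B ->
  has_induced_biclaw E t t.
Proof.
case=> Esym Eirr bipE Exy /subsetP AN xA /subsetP BN yB
  /exists_inj_into[gA gAi gAA] /exists_inj_into[gB gBi gBB] AB.
have opp u v : E u v -> (v \in X) = (u \notin X).
  by move=> /(bipartition_edge bipE) ->; rewrite negbK.
have xy : (y \in X) = (x \notin X) := opp x y Exy.
have adjA i : E y (gA i) by have := AN _ (gAA i); rewrite inE.
have adjB j : E x (gB j) by have := BN _ (gBB j); rewrite inE.
have sideA i : (gA i \in X) = (x \in X) by rewrite (opp _ _ (adjA i)) xy negbK.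
have sideB j : (gB j \in X) = (y \in X) by rewrite (opp _ _ (adjB j)) xy.
pose f (u : biclaw_vtx t t) : T := match u with
  | inl (inl _) => x | inl (inr _) => y
  | inr (inl i) => gA i | inr (inr j) => gB j end.
exists f; split.
  have side u : f u \in X =
      match u with inl (inl _) | inr (inl _) => x \in X | _ => y \in X end.
    by case: u => [[[]|[]]|[i|j]] //=.
  move=> u v fuv; have := side u; rewrite fuv side.
  case: u v fuv => [[[]|[]]|[i|i]] [[[]|[]]|[j|j]] //= fuv; rewrite ?xy;
    try by case: (x \in X).
  - by have := gAA j; rewrite -fuv (negbTE xA).
  - by have := gBB j; rewrite -fuv (negbTE yB).
  - by have := gAA i; rewrite fuv (negbTE xA).
  - by rewrite (gAi _ _ fuv).
  - by have := gBB i; rewrite fuv (negbTE yB).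
  - by rewrite (gBi _ _ fuv).
move=> u v; have nE := bipartition_nonedge bipE.
case: u v => [[[]|[]]|[i|i]] [[[]|[]]|[j|j]] /=; rewrite ?Eirr ?Exy ?adjA ?adjB //;
  try by [apply: nE; rewrite ?sideA ?sideB | rewrite Esym ?Exy ?adjA ?adjB].
- exact/negbTE/AB.
- by rewrite Esym; apply/negbTE/AB.
Qed.

Section DoubleCounting.
Variables (R : realFieldType) (T : finType) (E : rel T).

Lemma sum_card_non_nbrs (A Q : {set T}) :
  (\sum_(s in A) #|[set q in Q | ~~ E q s]| = \sum_(q in Q) #|A :\: nbhd E q|)%N.
Proof.
under eq_bigr do rewrite card_set_predE.
rewrite exchange_big; apply: eq_bigr => q _.
by rewrite -card_set_predE; apply: eq_card => s; rewrite !inE andbC.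
Qed.

Lemma exists_many_non_nbrs (A Q : {set T}) (m : R) :
  A != set0 -> (forall q, q \in Q -> m <= #|A :\: nbhd E q|%:R) ->
  exists2 s, s \in A & m * #|Q|%:R <= #|A|%:R * #|[set q in Q | ~~ E q s]|%:R.
Proof.
move=> /set0Pn[s0 s0A] Qm; apply/exists_inP; apply: contraT => /exists_inPn few.
have le_sum : m * #|Q|%:R <= \sum_(s in A) #|[set q in Q | ~~ E q s]|%:R :> R.
  rewrite -natr_sum sum_card_non_nbrs natr_sum mulrC mulr_natl -sumr_const.
  exact: ler_sum.
have : \sum_(s in A) #|A|%:R * #|[set q in Q | ~~ E q s]|%:R
       < \sum_(s in A) m * #|Q|%:R :> R.
  apply: ltr_sum; first by apply/hasP; exists s0; rewrite ?mem_index_enum.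
  by move=> s /few; rewrite -ltNge.
rewrite -mulr_sumr sumr_const -[X in _ < X]mulr_natl.
by rewrite ltNge ler_wpM2l.
Qed.

Lemma exists_anticomplete_subsets t (e : R) (S Q : {set T}) :
  0 < e -> e <= 1 -> 2 * t%:R <= e * #|S|%:R ->
  (forall q, q \in Q -> e * #|S|%:R < #|S :\: nbhd E q|%:R) ->
  forall k, (k <= t)%N -> exists Sk Qk : {set T},
    [/\ Sk \subset S, #|Sk| = k, Qk \subset Q,
        (e / 2) ^+ k * #|Q|%:R <= #|Qk|%:R & anticomplete E Qk Sk].
Proof.
move=> e0 e1 tS far; elim=> [_ | k IH lt_kt].
  exists set0, Q; rewrite sub0set cards0 expr0 mul1r; split=> // q s _.
  by rewrite inE.
have [Sk [Qk [sSk cSk sQk bigQk acQk]]] := IH (ltnW lt_kt).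
have lt_kS : (k < #|S|)%N.
  rewrite -(ltr_nat R); move: lt_kt; rewrite -(ler_nat R) -natr1.
  have := ler_piMl (ler0n R #|S|) e1; have := ler0n R k; lra.
set A := S :\: Sk.
have A0 : A != set0 by rewrite -card_gt0 cardsD (setIidPr sSk) cSk subn_gt0.
have missA q : q \in Qk -> e * #|S|%:R / 2 <= #|A :\: nbhd E q|%:R.
  move=> qQk; have := far q (subsetP sQk q qQk).
  have : (#|S :\: nbhd E q| <= #|A :\: nbhd E q| + k)%N.
    rewrite -cSk; apply: leq_trans (leq_card_setU _ _); apply: subset_leq_card.
    by apply/subsetP => s; rewrite !inE; case: (s \in Sk); rewrite /= ?orbT ?orbF.
  move: lt_kt; rewrite -!(ler_nat R) natrD -natr1; lra.
have [s sA hs] := exists_many_non_nbrs A0 missA.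
move: sA; rewrite inE => /andP[sSk' sS].
exists (s |: Sk), [set q in Qk | ~~ E q s]; split.
- by rewrite subUset sub1set sS.
- by rewrite cardsU1 sSk' cSk.
- by apply/subsetP => q; rewrite inE => /andP[/(subsetP sQk)].
- have le_AS : #|A|%:R <= #|S|%:R :> R by rewrite ler_nat subset_leq_card ?subsetDl.
  have S0 : 0 < #|S|%:R :> R by rewrite ltr0n (leq_ltn_trans _ lt_kS).
  have c0 := ler0n R #|[set q in Qk | ~~ E q s]|.
  rewrite exprS -mulrA; apply: le_trans (ler_wpM2l _ bigQk) _; [lra | nra].
- move=> q s'; rewrite !inE => /andP[qQk nqs] /predU1P[-> // | s'Sk].
  exact: acQk.
Qed.

End DoubleCounting.

Lemma exists_common_nbr (T : finType) (E : rel T) a c :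
  (missed E a c < #|nbhd E a|)%N -> exists2 z, E a z & E c z.
Proof.
move=> /exists_notin_of_card_lt[z zNa]; rewrite inE zNa andbT negbK.
by move: zNa; rewrite !inE; exists z.
Qed.

Lemma card_nbhd_le_missed (T : finType) (E : rel T) a c w :
  (#|nbhd E a| <= missed E a c + 1 + #|(nbhd E a :&: nbhd E c) :\ w|)%N.
Proof.
rewrite -(cards1 w); apply: card_le_cover3; apply/subsetP => s.
by rewrite /nbhd !inE => ->; case: (E c s); case: (s == w).
Qed.

Lemma many_common_nbrs (R : realFieldType) (T : finType) (E : rel T) t a c w :
  (missed E a c)%:R <= 1 / 2 * #|nbhd E a|%:R :> R -> (4 * t + 4 <= #|nbhd E a|)%N ->
  (t <= #|(nbhd E a :&: nbhd E c) :\ w|)%N.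
Proof.
have := card_nbhd_le_missed E a c w.
by rewrite -!(ler_nat R) !natrD; have := ler0n R t; lra.
Qed.

Lemma exists_link (T : finType) (E : rel T) (W Ys : {set T}) v :
  v \in W -> v \notin unlinked E W Ys -> exists2 q, q \in Ys & E v q.
Proof.
by move=> vW; rewrite inE vW negb_forall_in => /exists_inP[q qYs]; rewrite negbK; exists q.
Qed.

Section BiclawFree.
Variables (R : realFieldType) (T : finType) (E : rel T) (X Y : {set T}) (t : nat).
Hypotheses (sgE : simple_graph E) (bipE : bipartition E X Y)
  (biclaw_free : ~ has_induced_biclaw E t t).

Lemma card_far_nbrs_lt (e : R) x y (S : {set T}) :
  0 < e -> e <= 1 -> E x y -> S \subset nbhd E x -> y \notin S ->
  2 * t%:R <= e * #|S|%:R -> #|far_nbrs E e S y|%:R < far_bound t e.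
Proof.
move=> e0 e1 Exy SN yS tS; rewrite ltNge; apply/negP => many; apply: biclaw_free.
have far q : q \in far_nbrs E e S y -> e * #|S|%:R < #|S :\: nbhd E q|%:R.
  by rewrite inE => /andP[].
have [St [Qt [sSt cSt sQt bigQt acQt]]] :=
  exists_anticomplete_subsets e0 e1 tS far (leqnn t).
apply: (biclaw_of_anticomplete sgE bipE Exy (A := Qt) (B := St)) => //.
- by apply: subset_trans sQt _; apply/subsetP => q; rewrite inE => /andP[].
- apply/negP => /(subsetP sQt) /far; apply/negP; rewrite -leNgt.
  by move: SN; rewrite -setD_eq0 => /eqP->; rewrite cards0 mulr_ge0 // ltW.
- exact: subset_trans sSt SN.
- by apply: contra yS; apply/subsetP.
- rewrite -(ler_nat R); apply: le_trans bigQt.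
  by move: many; rewrite /far_bound ler_pdivrMr ?exprn_gt0 ?divr_gt0 // mulrC.
- by rewrite cSt.
Qed.

Lemma few_nbrs_miss_more (e beta : R) a c w :
  0 < e -> e <= 1 -> E c w -> (missed E a c)%:R <= beta ->
  2 * t%:R <= e * (#|nbhd E a|%:R - beta - 1) ->
  exists2 Bad : {set T}, #|Bad|%:R < far_bound t e &
    forall q, q \in nbhd E w -> q \notin Bad ->
      (missed E a q)%:R <= beta + 1 + e * #|nbhd E a|%:R.
Proof.
move=> e0 e1 Ecw missc tNa.
set S := (nbhd E a :&: nbhd E c) :\ w.
have SNc : S \subset nbhd E c by apply/subsetP => s; rewrite !inE => /and3P[].
have wS : w \notin S by rewrite !inE eqxx.
have SNa : (#|S| <= #|nbhd E a|)%N.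
  by apply/subset_leq_card/subsetP => s; rewrite !inE => /and3P[].
have tS : 2 * t%:R <= e * #|S|%:R.
  apply: le_trans tNa _; rewrite ler_pM2l //.
  by have := card_nbhd_le_missed E a c w; rewrite -(ler_nat R) !natrD; lra.
exists (far_nbrs E e S w); first exact: card_far_nbrs_lt e0 e1 Ecw SNc wS tS.
move=> q qNw; rewrite inE qNw /= -leNgt => near_q.
have : (missed E a q <= missed E a c + #|[set w]| + #|S :\: nbhd E q|)%N.
  apply: card_le_cover3; apply/subsetP => s; rewrite /nbhd !inE => /andP[-> ->].
  by case: (E c s); case: (s == w).
have : e * #|S|%:R <= e * #|nbhd E a|%:R by rewrite ler_wpM2l ?ler_nat ?ltW.
by rewrite cards1 -(ler_nat R) !natrD; lra.
Qed.

Lemma few_nbrs_without_good_link (e : R) a z v :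
  (0 < t)%N -> 0 < e -> e < 1 -> E a z -> E z v ->
  2 * t%:R <= e * (#|nbhd E a|%:R - 1) ->
  2 * t%:R <= e * (#|nbhd E z|%:R - far_bound t e - 1) ->
  exists2 Bad : {set T}, #|Bad|%:R < far_bound t e &
    forall w, w \in nbhd E v -> w \notin Bad ->
      exists2 c, c \in nbhd E w :&: nbhd E z &
        (missed E a c)%:R <= 1 + e * #|nbhd E a|%:R.
Proof.
move=> t0 e0 e1 Eaz Ezv tNa tNz.
have [Bz Bz_small Bz_good] : exists2 Bz : {set T}, #|Bz|%:R < far_bound t e &
    forall c, c \in nbhd E z -> c \notin Bz ->
      (missed E a c)%:R <= 0 + 1 + e * #|nbhd E a|%:R.
  apply: (few_nbrs_miss_more (c := a)) => //; first exact: ltW.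
    by rewrite /missed setDv cards0.
  by rewrite subr0.
set S := (nbhd E z :\: Bz) :\ v.
have SNz : S \subset nbhd E z by apply/subsetP => s; rewrite !inE => /and3P[].
have vS : v \notin S by rewrite !inE eqxx.
have tS : 2 * t%:R <= e * #|S|%:R.
  apply: le_trans tNz _; rewrite ler_pM2l //.
  have : (#|nbhd E z| <= #|Bz| + #|[set v]| + #|S|)%N.
    apply: card_le_cover3; apply/subsetP => s; rewrite /nbhd !inE => ->.
    by case: (s \in Bz); case: (s == v).
  by rewrite cards1 -(ler_nat R) !natrD; lra.
exists (far_nbrs E e S v); first exact: card_far_nbrs_lt (ltW e1) Ezv SNz vS tS.
move=> w wNv; rewrite inE wNv /= -leNgt => near_w.
have [c cS Ewc] : exists2 c, c \in S & E w c.
  apply/exists_inP; apply: contraT => /exists_inPn noc.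
  have SNw : S :\: nbhd E w = S.
    apply/setP => s; rewrite in_setD; case sS: (s \in S); rewrite ?andbF ?andbT //.
    by rewrite /nbhd inE noc.
  have t1 : 1 <= t%:R :> R by rewrite ler1n.
  have := ler0n R #|S|; move: near_w; rewrite SNw; nra.
exists c; first by rewrite inE [c \in nbhd E w]inE Ewc (subsetP SNz).
have cNz := subsetP SNz c cS; move: cS; rewrite !inE => /and3P[_ cBz _].
by have := Bz_good c cNz cBz; rewrite add0r.
Qed.

Lemma exists_walk4_dominator (e : R) a b :
  (0 < t)%N -> 0 < e -> e < 1 -> (forall v, dom_degree t e <= #|nbhd E v|%:R) ->
  walk4 E a b -> exists q, walk4 E a q /\
    (missed E a q)%:R <= e * #|nbhd E a|%:R /\ (missed E b q)%:R <= e * #|nbhd E b|%:R.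
Proof.
move=> t0 e0 e1 deg [z1 [m [z2 [Eaz1 Ez1m Emz2 Ez2b]]]]; case: sgE => Esym _.
have f0 : 0 < e / 4 by rewrite divr_gt0.
have f1 : e / 4 < 1 by lra.
have degs v := dom_degree_large e0 e1 (deg v).
have [tNa _ tDa _ ea] := degs a; have [tNb _ tDb _ eb] := degs b.
have [_ tMz1 _ _ _] := degs z1; have [_ tMz2 _ _ _] := degs z2.
have [Bm1 Bm1_small Bm1_good] :=
  few_nbrs_without_good_link t0 f0 f1 Eaz1 Ez1m tNa tMz1.
have [Bm2 Bm2_small Bm2_good] := few_nbrs_without_good_link t0 f0 f1
  (etrans (Esym _ _) Ez2b) (etrans (Esym _ _) Emz2) tNb tMz2.
have [_ _ _ Mm _] := degs m.
have [w [wNm wBm1 wBm2]] := exists_notin2 Bm1_small Bm2_small Mm.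
have [c1 c1N c1a] := Bm1_good w wNm wBm1.
have [c2 c2N c2b] := Bm2_good w wNm wBm2.
have [Ec1w Ez1c1] : E c1 w /\ E z1 c1 by move: c1N; rewrite !inE Esym => /andP[].
have Ec2w : E c2 w by move: c2N; rewrite !inE Esym => /andP[].
have [Ba Ba_small Ba_good] := few_nbrs_miss_more f0 (ltW f1) Ec1w c1a tDa.
have [Bb Bb_small Bb_good] := few_nbrs_miss_more f0 (ltW f1) Ec2w c2b tDb.
have [_ _ _ Mw _] := degs w.
have [q [qNw qBa qBb]] := exists_notin2 Ba_small Bb_small Mw.
exists q; split; first by exists z1, c1, w; split=> //; move: qNw; rewrite inE.
by have := Ba_good q qNw qBa; have := Bb_good q qNw qBb; lra.
Qed.

Lemma few_unlinked_nbrs x y (Ys : {set T}) :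
  E x y -> Ys \subset nbhd E x -> y \notin Ys -> (0 < t <= #|Ys|)%N ->
  (#|unlinked E (nbhd E y) Ys| < t)%N.
Proof.
move=> Exy YsN yYs /andP[t0 tYs]; rewrite ltnNge; apply/negP => many.
apply: biclaw_free; apply: (biclaw_of_anticomplete sgE bipE Exy _ _ YsN yYs many tYs).
- by apply/subsetP => v; rewrite inE => /andP[].
- have [q qYs] : exists q, q \in Ys by apply/set0Pn; rewrite -card_gt0 (leq_trans t0).
  apply: contraL (subsetP YsN q qYs); rewrite !inE => /andP[_ /forall_inP noE].
  exact: noE.
- by move=> v q; rewrite inE => /andP[_ /forall_inP noE] /noE.
Qed.

Section Extension.
Hypotheses (t_gt0 : (0 < t)%N) (deg : forall v, step_degree R t <= #|nbhd E v|%:R).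

Let half_gt0 : 0 < 1 / 2 :> R. Proof. lra. Qed.
Let half_lt1 : 1 / 2 < 1 :> R. Proof. lra. Qed.

Let deg4 v : (4 * t + 4 <= #|nbhd E v|)%N.
Proof.
rewrite -(ler_nat R); have := deg v; rewrite /step_degree.
have : 0 <= far_bound t (1 / 2 : R) by apply: far_bound_ge0.
have : 0 <= dom_degree t (1 / 2 : R) by apply: dom_degree_ge0.
lra.
Qed.

Let half_missed_lt v c : (missed E v c)%:R <= 1 / 2 * #|nbhd E v|%:R :> R ->
  (missed E v c < #|nbhd E v|)%N.
Proof.
rewrite -(ltr_nat R); have := deg4 v; rewrite -(ler_nat R) natrD natrM.
by have := ler0n R t; lra.
Qed.

Let dominate a b : walk4 E a b -> exists q, walk4 E a q /\
  (missed E a q)%:R <= 1 / 2 * #|nbhd E a|%:R :> R /\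
  (missed E b q)%:R <= 1 / 2 * #|nbhd E b|%:R :> R.
Proof.
apply: exists_walk4_dominator t_gt0 half_gt0 half_lt1 _ => v.
have := deg v; rewrite /step_degree; have := ler0n R (4 * t + 4).
have : 0 <= far_bound t (1 / 2 : R) by apply: far_bound_ge0.
lra.
Qed.

Lemma walk4_of_many_common_nbrs a v b :
  walk4 E a v -> (t < #|nbhd E b :&: nbhd E v|)%N -> walk4 E a b.
Proof.
move=> av tbv; case: sgE => Esym _.
have [c [_ [ac vc]]] := dominate av.
have [w vw cw] := exists_common_nbr (half_missed_lt vc).
set Ya := (nbhd E a :&: nbhd E c) :\ w.
have YaN : Ya \subset nbhd E c by apply/subsetP => s; rewrite !inE => /and3P[].
have wYa : w \notin Ya by rewrite !inE eqxx.
have tYa : (0 < t <= #|Ya|)%N by rewrite t_gt0 (many_common_nbrs w ac (deg4 a)).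
set Yb := (nbhd E b :&: nbhd E v) :\ w.
have YbN : Yb \subset nbhd E v by apply/subsetP => s; rewrite !inE => /and3P[].
have wYb : w \notin Yb by rewrite !inE eqxx.
have tYb : (0 < t <= #|Yb|)%N.
  have : (#|nbhd E b :&: nbhd E v| <= #|Yb| + 1)%N.
    by rewrite (cardsD1 w) addnC leq_add2l leq_b1.
  by rewrite t_gt0; lia.
have [z [zNw zUa zUb]] : exists z, [/\ z \in nbhd E w,
    z \notin unlinked E (nbhd E w) Ya & z \notin unlinked E (nbhd E w) Yb].
  apply: (exists_notin2 (M1 := t%:R) (M2 := t%:R)).
  - by rewrite ltr_nat (few_unlinked_nbrs cw YaN wYa tYa).
  - by rewrite ltr_nat (few_unlinked_nbrs vw YbN wYb tYb).
  by have := deg4 w; rewrite -(ler_nat R) natrD natrM; have := ler0n R t; lra.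
have [ya yaYa zya] := exists_link zNw zUa.
have [yb ybYb zyb] := exists_link zNw zUb.
move: yaYa ybYb; rewrite !inE => /and3P[_ aya _] /and3P[_ byb _].
by exists ya, z, yb; split; rewrite // Esym.
Qed.

Lemma exists_walk4_with_many_common_nbrs a u w b :
  walk4 E a u -> E u w -> E w b ->
  exists2 v, walk4 E a v & (t < #|nbhd E b :&: nbhd E v|)%N.
Proof.
move=> au uw wb; case: sgE => Esym _.
have [c [_ [ac uc]]] := dominate au.
set Yu := (nbhd E u :&: nbhd E c) :\ w.
have YuN : Yu \subset nbhd E u by apply/subsetP => s; rewrite !inE => /and3P[].
have wYu : w \notin Yu by rewrite !inE eqxx.
have tYu : (0 < t <= #|Yu|)%N by rewrite t_gt0 (many_common_nbrs w uc (deg4 u)).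
have Uu_small : #|unlinked E (nbhd E w) Yu|%:R < t%:R :> R.
  by rewrite ltr_nat (few_unlinked_nbrs uw YuN wYu tYu).
set S := nbhd E b :\ w.
have SN : S \subset nbhd E b by apply/subsetP => s; rewrite !inE => /andP[].
have wS : w \notin S by rewrite !inE eqxx.
have Sb : (#|nbhd E b| <= #|S| + 1)%N by rewrite (cardsD1 w) addnC leq_add2l leq_b1.
have tS : 2 * t%:R <= 1 / 2 * #|S|%:R :> R.
  by move: Sb (deg4 b); rewrite -!(ler_nat R) !natrD; have := ler0n R t; lra.
have Far_small := card_far_nbrs_lt half_gt0 (ltW half_lt1) (etrans (Esym _ _) wb)
  SN wS tS.
have [v [vNw vUu vFar]] : exists v, [/\ v \in nbhd E w,
    v \notin unlinked E (nbhd E w) Yu & v \notin far_nbrs E (1 / 2 : R) S w].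
  apply: (exists_notin2 Uu_small Far_small).
  have := deg w; rewrite /step_degree natrD natrM; have := ler0n R t.
  have : 0 <= dom_degree t (1 / 2 : R) by apply: dom_degree_ge0.
  lra.
have [y yYu vy] := exists_link vNw vUu.
move: yYu; rewrite !inE => /and3P[_ _ cy].
have [z az cz] := exists_common_nbr (half_missed_lt ac).
exists v; first by exists z, c, y; split; rewrite // Esym.
have : (#|S| <= #|S :\: nbhd E v| + #|nbhd E b :&: nbhd E v|)%N.
  apply: leq_trans (leq_card_setU _ _); apply/subset_leq_card/subsetP => s sS.
  by rewrite in_setU in_setD in_setI sS (subsetP SN s sS) /=; case: (s \in nbhd E v).
move: vFar; rewrite inE vNw /= -leNgt -(ltr_nat R) -(ler_nat R) natrD.
by move: t_gt0; rewrite -(ltr_nat R); lra.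
Qed.

Lemma walk4_extend a u w b : walk4 E a u -> E u w -> E w b -> walk4 E a b.
Proof.
move=> au uw wb; have [v av tbv] := exists_walk4_with_many_common_nbrs au uw wb.
exact: walk4_of_many_common_nbrs av tbv.
Qed.

Lemma walk4_or_odd_of_connect a b :
  connect E a b -> walk4 E a b \/ exists2 u, walk4 E a u & E u b.
Proof.
case: sgE => Esym _ /connectP[p pth ->]; elim/last_ind: p pth => [_ | p z IH] /=.
  have /set0Pn[z] : nbhd E a != set0 by rewrite -card_gt0; have := deg4 a; lia.
  by rewrite inE => az; left; exists z, a, z; split; rewrite // Esym.
rewrite rcons_path last_rcons => /andP[pth lz].
case: (IH pth) => [ap | [u au uw]]; first by right; exists (last a p).
by left; exact: walk4_extend au uw lz.
Qed.

Lemma walk4_of_same_part P a b :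
  connected_graph E -> P = X \/ P = Y -> a \in P -> b \in P -> walk4 E a b.
Proof.
move=> conn PXY aP bP; case: (walk4_or_odd_of_connect (conn a b)) => // [[u au ub]].
have := bipartition_edge_part bipE PXY ub.
by rewrite -(walk4_part bipE PXY au) aP bP.
Qed.

End Extension.

End BiclawFree.

Theorem mainTheorem12 (R : realType) :
  exists C : nat -> R -> R,
  forall (t : nat) (eps : R), (0 < t)%N -> 0 < eps < 1 ->
  forall (T : finType) (E : rel T) (X Y : {set T}),
    simple_graph E ->
    connected_graph E ->
    bipartition E X Y ->
    #|X| = #|Y| ->
    (forall v : T, 3%:R * C t eps <= (#|nbhd E v|)%:R) ->
    ~ has_induced_biclaw E t t ->
    forall P : {set T}, (P = X \/ P = Y) ->
    forall a b : T, a \in P -> b \in P ->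
    exists2 c : T, c \in P &
      ((#|nbhd E a :\: nbhd E c|)%:R <= eps * (#|nbhd E a|)%:R) /\
      ((#|nbhd E b :\: nbhd E c|)%:R <= eps * (#|nbhd E b|)%:R).
Proof.
exists (fun t eps => dom_degree t eps + step_degree R t).
move=> t eps t_gt0 /andP[eps_gt0 eps_lt1] T E X Y sgE conn bipE _ deg biclaw_free
  P PXY a b aP bP.
have := dom_degree_ge0 t eps_gt0; have := step_degree_ge0 R t => step_ge0 dom_ge0.
have deg_dom v : dom_degree t eps <= #|nbhd E v|%:R by have := deg v; lra.
have deg_step v : step_degree R t <= #|nbhd E v|%:R by have := deg v; lra.
have ab := walk4_of_same_part sgE bipE biclaw_free t_gt0 deg_step conn PXY aP bP.
have [c [ac close_c]] :=
  exists_walk4_dominator sgE bipE biclaw_free t_gt0 eps_gt0 eps_lt1 deg_dom ab.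
by exists c; rewrite // -(walk4_part bipE PXY ac).
Qed.
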